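(* Let $\Gamma$ be a finite multiset of ${\sf Frm_2}$-formulas and $\Delta$ a finite multiset of ${\sf Frm}$-formulas. If $\Gamma\Rightarrow\Delta$ is derivable in ${\sf GWF_{N_2}}$, then $\Gamma\Rightarrow\bigvee\Delta$ is derivable in ${\sf GWF^s_{N_2}}$.
   Context: Language: countably many atoms $p,q,\dots$, the constant $\bot$, and binary connectives $\wedge,\vee,\rightarrow$ ($\rightarrow$ is strict implication). ${\sf Frm}$ is the set of formulas built from atoms and $\bot$ with $\wedge,\vee,\rightarrow$; $A,B,C,D$ range over ${\sf Frm}$. Let $\supset$ be a new binary symbol (material implication) and ${\sf Frm_1}={\sf Frm}\cup\{A\supset B : A,B\in{\sf Frm}\}$ (no nesting of $\supset$). ${\sf Frm_2}$ is the smallest set containing ${\sf Frm_1}$ and closed under $\wedge$ and $\vee$; $X,Y,Z$ range over ${\sf Frm_2}$. Multi-succedent sequents are $\Gamma\Rightarrow\Delta$ with $\Gamma,\Delta$ finite multisets of ${\sf Frm_2}$-formulas. The calculus ${\sf GWF_{N_2}}$ has initial sequents $(id)$ $p,\Gamma\Rightarrow\Delta,p$ ($p$ an atom) and $(L_\bot)$ $\bot,\Gamma\Rightarrow\Delta$, and rules (premises / conclusion): $(L_\wedge)$ $X,Y,\Gamma\Rightarrow\Delta$ / $X\wedge Y,\Gamma\Rightarrow\Delta$; $(R_\wedge)$ $\Gamma\Rightarrow\Delta,X$ and $\Gamma\Rightarrow\Delta,Y$ / $\Gamma\Rightarrow\Delta,X\wedge Y$; $(L_\vee)$ $X,\Gamma\Rightarrow\Delta$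 and $Y,\Gamma\Rightarrow\Delta$ / $X\vee Y,\Gamma\Rightarrow\Delta$; $(R_\vee)$ $\Gamma\Rightarrow\Delta,X,Y$ / $\Gamma\Rightarrow\Delta,X\vee Y$; $(L_\supset)$ $\Gamma\Rightarrow\Delta,A$ and $B,\Gamma\Rightarrow\Delta$ / $A\supset B,\Gamma\Rightarrow\Delta$; $(R_\supset)$ $A,\Gamma\Rightarrow\Delta,B$ / $\Gamma\Rightarrow\Delta,A\supset B$; $(LR_\rightarrow)$ $C\supset D,A\Rightarrow B$ / $\Gamma,C\rightarrow D\Rightarrow\Delta,A\rightarrow B$; $(R_\rightarrow)$ $A\Rightarrow B$ / $\Gamma\Rightarrow\Delta,A\rightarrow B$. The single-succedent calculus ${\sf GWF^s_{N_2}}$ (sequents $\Gamma\Rightarrow Z$, $Z\in{\sf Frm_2}$) has initial sequents $(id^s)$ $p,\Gamma\Rightarrow p$ and $(L^s_\bot)$ $\bot,\Gamma\Rightarrow Z$, and rules: $(L^s_\wedge)$ $X,Y,\Gamma\Rightarrow Z$ / $X\wedge Y,\Gamma\Rightarrow Z$; $(R^s_\wedge)$ $\Gamma\Rightarrow X$ and $\Gamma\Rightarrow Y$ / $\Gamma\Rightarrow X\wedge Y$; $(L^s_\vee)$ $X,\Gamma\Rightarrow Z$ and $Y,\Gamma\Rightarrow Z$ / $X\vee Y,\Gamma\Rightarrow Z$; $(R^s_{\vee_l})$ $\Gamma\Rightarrow X$ / $\Gamma\Rightarrow X\vee Y$; $(R^s_{\vee_r})$ $\Gamma\Rightarrow Y$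 / $\Gamma\Rightarrow X\vee Y$; $(L^s_\supset)$ $A\supset B,\Gamma\Rightarrow A$ and $B,\Gamma\Rightarrow Z$ / $A\supset B,\Gamma\Rightarrow Z$; $(R^s_\supset)$ $A,\Gamma\Rightarrow B$ / $\Gamma\Rightarrow A\supset B$; $(LR^s_\rightarrow)$ $C\supset D,A\Rightarrow B$ / $\Gamma,C\rightarrow D\Rightarrow A\rightarrow B$; $(R^s_\rightarrow)$ $A\Rightarrow B$ / $\Gamma\Rightarrow A\rightarrow B$. In all rules $A,B,C,D\in{\sf Frm}$, $X,Y,Z\in{\sf Frm_2}$, $\Gamma,\Delta$ arbitrary finite multisets of ${\sf Frm_2}$-formulas. $\bigvee\Delta$ is the disjunction of the members of $\Delta$ (the empty disjunction being $\bot$). *)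

(* Multisets are represented as lists; derivability is closed
   under permutation of the antecedent / succedent by explicit exchange rules,
   so derivability only depends on the underlying multisets. *)
From Stdlib Require Import List Permutation.
Import ListNotations.

(* Frm: atoms, bottom, /\, \/, strict implication -> *)
Inductive Frm : Type :=
| Atom : nat -> Frm
| Bot : Frm
| And : Frm -> Frm -> Frm
| Or : Frm -> Frm -> Frm
| Imp : Frm -> Frm -> Frm.

(* Frm2: smallest set containing Frm, the material implications A ⊃ B
   (A B in Frm, no nesting), closed under /\ and \/. *)
Inductive Frm2 : Type :=
| Base : Frm -> Frm2
| Mat : Frm -> Frm -> Frm2
| And2 : Frm2 -> Frm2 -> Frm2
| Or2 : Frm2 -> Frm2 -> Frm2.

(* In Frm2, a conjunction/disjunction of Frm-formulas embedded via Base is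
   identified with the embedded conjunction/disjunction. *)
Fixpoint norm2 (X : Frm2) : Frm2 :=
  match X with
  | Base A => Base A
  | Mat A B => Mat A B
  | And2 X Y =>
      match norm2 X, norm2 Y with
      | Base A, Base B => Base (And A B)
      | X', Y' => And2 X' Y'
      end
  | Or2 X Y =>
      match norm2 X, norm2 Y with
      | Base A, Base B => Base (Or A B)
      | X', Y' => Or2 X' Y'
      end
  end.

Definition andF (X Y : Frm2) : Frm2 := norm2 (And2 X Y).
Definition orF (X Y : Frm2) : Frm2 := norm2 (Or2 X Y).

Inductive GWF : list Frm2 -> list Frm2 -> Prop :=
| g_perm : forall G G' D D', Permutation G G' -> Permutation D D' ->
    GWF G D -> GWF G' D'
| g_id : forall p G D, GWF (Base (Atom p) :: G) (Base (Atom p) :: D)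
| g_Lbot : forall G D, GWF (Base Bot :: G) D
| g_Land : forall X Y G D, GWF (X :: Y :: G) D -> GWF (andF X Y :: G) D
| g_Rand : forall X Y G D, GWF G (X :: D) -> GWF G (Y :: D) ->
    GWF G (andF X Y :: D)
| g_Lor : forall X Y G D, GWF (X :: G) D -> GWF (Y :: G) D ->
    GWF (orF X Y :: G) D
| g_Ror : forall X Y G D, GWF G (X :: Y :: D) -> GWF G (orF X Y :: D)
| g_Lmat : forall A B G D, GWF G (Base A :: D) -> GWF (Base B :: G) D ->
    GWF (Mat A B :: G) D
| g_Rmat : forall A B G D, GWF (Base A :: G) (Base B :: D) ->
    GWF G (Mat A B :: D)
| g_LRimp : forall A B C E G D, GWF [Mat C E; Base A] [Base B] ->
    GWF (Base (Imp C E) :: G) (Base (Imp A B) :: D)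
| g_Rimp : forall A B G D, GWF [Base A] [Base B] ->
    GWF G (Base (Imp A B) :: D).

Inductive GWFs : list Frm2 -> Frm2 -> Prop :=
| s_perm : forall G G' Z, Permutation G G' -> GWFs G Z -> GWFs G' Z
| s_id : forall p G, GWFs (Base (Atom p) :: G) (Base (Atom p))
| s_Lbot : forall G Z, GWFs (Base Bot :: G) Z
| s_Land : forall X Y G Z, GWFs (X :: Y :: G) Z -> GWFs (andF X Y :: G) Z
| s_Rand : forall X Y G, GWFs G X -> GWFs G Y -> GWFs G (andF X Y)
| s_Lor : forall X Y G Z, GWFs (X :: G) Z -> GWFs (Y :: G) Z ->
    GWFs (orF X Y :: G) Z
| s_Rorl : forall X Y G, GWFs G X -> GWFs G (orF X Y)
| s_Rorr : forall X Y G, GWFs G Y -> GWFs G (orF X Y)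
| s_Lmat : forall A B G Z, GWFs (Mat A B :: G) (Base A) ->
    GWFs (Base B :: G) Z -> GWFs (Mat A B :: G) Z
| s_Rmat : forall A B G, GWFs (Base A :: G) (Base B) -> GWFs G (Mat A B)
| s_LRimp : forall A B C E G, GWFs [Mat C E; Base A] (Base B) ->
    GWFs (Base (Imp C E) :: G) (Base (Imp A B))
| s_Rimp : forall A B G, GWFs [Base A] (Base B) ->
    GWFs G (Base (Imp A B)).

Fixpoint bigOr (D : list Frm) : Frm :=
  match D with
  | [] => Bot
  | [A] => A
  | A :: D' => Or A (bigOr D')
  end.

(* Canonical Frm2 terms: the representation in which Frm-formulas are
   always embedded via Base (so each Frm2-formula has a unique term). *)
Definition canon2 (X : Frm2) : Prop := norm2 X = X.

(* Read the succedent of a multi-succedent sequent as the disjunction of its members.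
   Every rule of GWF_{N_2} then becomes admissible in the single-succedent calculus as
   soon as cut is: e.g. from [G => A \/ \/D] and [G => B \/ \/D] one obtains
   [G => (A /\ B) \/ \/D] by cutting on the two disjunctions.  Cut admissibility is the
   usual double induction on the size of the cut formula and on the derivation of the
   right premise, relying on inversion of the left rules for /\ and \/, of the second
   premise of the left rule for ⊃, and of the right rules for /\ and ⊃; two strict
   implications meeting in a cut reduce to a cut on the smaller material implication. *)

From Stdlib Require Import List Permutation Lia.
Import ListNotations.

Lemma Frm_eq_dec (A B : Frm) : {A = B} + {A <> B}.
Proof. decide equality; apply PeanoNat.Nat.eq_dec. Qed.

Lemma Frm2_eq_dec (X Y : Frm2) : {X = Y} + {X <> Y}.
Proof. decide equality; apply Frm_eq_dec. Qed.

Ltac perm_solve :=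
  apply (Permutation_count_occ Frm2_eq_dec); let x := fresh "x" in intro x;
  repeat match goal with H : Permutation _ _ |- _ =>
    rewrite (Permutation_count_occ Frm2_eq_dec) in H; specialize (H x); revert H end;
  simpl; repeat rewrite ?count_occ_app; simpl;
  repeat match goal with |- context [Frm2_eq_dec ?a ?b] => destruct (Frm2_eq_dec a b) end;
  intros; lia.

Lemma Permutation_cons_cases (W X : Frm2) (G0 G : list Frm2) :
  Permutation (W :: G0) (X :: G) ->
  (W = X /\ Permutation G0 G) \/
  (exists G1, Permutation G0 (X :: G1) /\ Permutation G (W :: G1)).
Proof.
  intros HP.
  assert (Hin : In X (W :: G0)) by (apply (Permutation_in _ (Permutation_sym HP)); left; auto).
  destruct Hin as [-> | Hin].
  - left. split; [reflexivity | exact (Permutation_cons_inv HP)].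
  - right. apply in_split in Hin as (l1 & l2 & ->).
    exists (l1 ++ l2). split.
    + apply Permutation_sym, Permutation_middle.
    + apply (Permutation_cons_inv (a := X)), Permutation_sym.
      eapply perm_trans; [|exact HP]. perm_solve.
Qed.

Lemma norm2_idem (X : Frm2) : norm2 (norm2 X) = norm2 X.
Proof.
  induction X; simpl; auto;
    destruct (norm2 X1), (norm2 X2); simpl in *; rewrite ?IHX1, ?IHX2; auto.
Qed.

Lemma canon2_norm2 (X : Frm2) : canon2 (norm2 X).
Proof. apply norm2_idem. Qed.

Lemma norm2_andF (X Y : Frm2) : norm2 (andF X Y) = andF X Y.
Proof. apply norm2_idem. Qed.

Lemma norm2_orF (X Y : Frm2) : norm2 (orF X Y) = orF X Y.
Proof. apply norm2_idem. Qed.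

Lemma andF_norm2 (X Y : Frm2) : andF X Y = andF (norm2 X) (norm2 Y).
Proof. unfold andF; simpl; rewrite !norm2_idem; reflexivity. Qed.

Lemma orF_norm2 (X Y : Frm2) : orF X Y = orF (norm2 X) (norm2 Y).
Proof. unfold orF; simpl; rewrite !norm2_idem; reflexivity. Qed.

Lemma andF_inj (X Y X' Y' : Frm2) : canon2 X -> canon2 Y -> canon2 X' -> canon2 Y' ->
  andF X Y = andF X' Y' -> X = X' /\ Y = Y'.
Proof.
  unfold canon2, andF; simpl; intros -> -> -> -> E.
  destruct X, Y, X', Y'; inversion E; auto.
Qed.

Lemma orF_inj (X Y X' Y' : Frm2) : canon2 X -> canon2 Y -> canon2 X' -> canon2 Y' ->
  orF X Y = orF X' Y' -> X = X' /\ Y = Y'.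
Proof.
  unfold canon2, orF; simpl; intros -> -> -> -> E.
  destruct X, Y, X', Y'; inversion E; auto.
Qed.

Lemma andF_eq_Base (X Y : Frm2) (A : Frm) : andF X Y = Base A ->
  exists A1 A2, norm2 X = Base A1 /\ norm2 Y = Base A2 /\ A = And A1 A2.
Proof. unfold andF; simpl; destruct (norm2 X), (norm2 Y); intros E; inversion E; eauto. Qed.

Lemma orF_eq_Base (X Y : Frm2) (A : Frm) : orF X Y = Base A ->
  exists A1 A2, norm2 X = Base A1 /\ norm2 Y = Base A2 /\ A = Or A1 A2.
Proof. unfold orF; simpl; destruct (norm2 X), (norm2 Y); intros E; inversion E; eauto. Qed.

(* Invariant under [norm2], so it tells the principal formulas apart without canonicity. *)
Definition conn (X : Frm2) : nat :=
  match X with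
  | Base (Atom _) => 0
  | Base Bot => 1
  | Base (And _ _) | And2 _ _ => 2
  | Base (Or _ _) | Or2 _ _ => 3
  | Base (Imp _ _) => 4
  | Mat _ _ => 5
  end.

Lemma conn_andF (X Y : Frm2) : conn (andF X Y) = 2.
Proof. unfold andF; simpl; destruct (norm2 X), (norm2 Y); reflexivity. Qed.

Lemma conn_orF (X Y : Frm2) : conn (orF X Y) = 3.
Proof. unfold orF; simpl; destruct (norm2 X), (norm2 Y); reflexivity. Qed.

Ltac conn_contra :=
  match goal with E : _ = _ |- _ =>
    apply (f_equal conn) in E; rewrite ?conn_andF, ?conn_orF in E; simpl in E; discriminate
  end.

Fixpoint fsize (A : Frm) : nat :=
  match A with
  | Atom _ | Bot => 1
  | And A B | Or A B => S (fsize A + fsize B)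
  | Imp A B => S (S (fsize A + fsize B))  (* larger than [Mat A B] *)
  end.

Fixpoint size2 (X : Frm2) : nat :=
  match X with
  | Base A => fsize A
  | Mat A B => S (fsize A + fsize B)
  | And2 X Y | Or2 X Y => S (size2 X + size2 Y)
  end.

Lemma size2_norm2 (X : Frm2) : size2 (norm2 X) = size2 X.
Proof.
  induction X; simpl; auto;
    destruct (norm2 X1), (norm2 X2); simpl in *; lia.
Qed.

Lemma size2_andF (X Y : Frm2) : size2 (andF X Y) = S (size2 X + size2 Y).
Proof.
  unfold andF; rewrite <- (size2_norm2 X), <- (size2_norm2 Y); simpl.
  destruct (norm2 X), (norm2 Y); reflexivity.
Qed.

Lemma size2_orF (X Y : Frm2) : size2 (orF X Y) = S (size2 X + size2 Y).
Proof.
  unfold orF; rewrite <- (size2_norm2 X), <- (size2_norm2 Y); simpl.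
  destruct (norm2 X), (norm2 Y); reflexivity.
Qed.

(* GWF^s with the components of principal conjunctions and disjunctions required to be
   canonical: then [andF] and [orF] are injective, which the inversion lemmas need. *)
Inductive GWFc : list Frm2 -> Frm2 -> Prop :=
| c_perm G G' Z : Permutation G G' -> GWFc G Z -> GWFc G' Z
| c_id p G : GWFc (Base (Atom p) :: G) (Base (Atom p))
| c_Lbot G Z : GWFc (Base Bot :: G) Z
| c_Land X Y G Z : canon2 X -> canon2 Y ->
    GWFc (X :: Y :: G) Z -> GWFc (andF X Y :: G) Z
| c_Rand X Y G : canon2 X -> canon2 Y ->
    GWFc G X -> GWFc G Y -> GWFc G (andF X Y)
| c_Lor X Y G Z : canon2 X -> canon2 Y ->
    GWFc (X :: G) Z -> GWFc (Y :: G) Z -> GWFc (orF X Y :: G) Z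
| c_Rorl X Y G : canon2 X -> canon2 Y -> GWFc G X -> GWFc G (orF X Y)
| c_Rorr X Y G : canon2 X -> canon2 Y -> GWFc G Y -> GWFc G (orF X Y)
| c_Lmat A B G Z : GWFc (Mat A B :: G) (Base A) ->
    GWFc (Base B :: G) Z -> GWFc (Mat A B :: G) Z
| c_Rmat A B G : GWFc (Base A :: G) (Base B) -> GWFc G (Mat A B)
| c_LRimp A B C E G : GWFc [Mat C E; Base A] (Base B) ->
    GWFc (Base (Imp C E) :: G) (Base (Imp A B))
| c_Rimp A B G : GWFc [Base A] (Base B) -> GWFc G (Base (Imp A B)).

Lemma GWFc_GWFs G Z : GWFc G Z -> GWFs G Z.
Proof.
  induction 1.
  - eapply s_perm; eauto.
  - apply s_id.
  - apply s_Lbot.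
  - apply s_Land; auto.
  - apply s_Rand; auto.
  - apply s_Lor; auto.
  - apply s_Rorl; auto.
  - apply s_Rorr; auto.
  - apply s_Lmat; auto.
  - apply s_Rmat; auto.
  - apply s_LRimp; auto.
  - apply s_Rimp; auto.
Qed.

Ltac permute_to L := apply c_perm with L; [perm_solve |].

Lemma GWFc_weaken G Z W : GWFc G Z -> GWFc (W :: G) Z.
Proof.
  intros d; revert W; induction d; intros W.
  - permute_to (W :: G); auto.
  - permute_to (Base (Atom p) :: W :: G). apply c_id.
  - permute_to (Base Bot :: W :: G). apply c_Lbot.
  - permute_to (andF X Y :: W :: G). apply c_Land; auto.
    permute_to (W :: X :: Y :: G); auto.
  - apply c_Rand; auto.
  - permute_to (orF X Y :: W :: G). apply c_Lor; auto.
    + permute_to (W :: X :: G); auto.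
    + permute_to (W :: Y :: G); auto.
  - apply c_Rorl; auto.
  - apply c_Rorr; auto.
  - permute_to (Mat A B :: W :: G). apply c_Lmat.
    + permute_to (W :: Mat A B :: G); auto.
    + permute_to (W :: Base B :: G); auto.
  - apply c_Rmat. permute_to (W :: Base A :: G); auto.
  - permute_to (Base (Imp C E) :: W :: G). apply c_LRimp; auto.
  - apply c_Rimp; auto.
Qed.

Lemma GWFc_refl A G : GWFc (Base A :: G) (Base A).
Proof.
  revert G; induction A as [p | | A1 IH1 A2 IH2 | A1 IH1 A2 IH2 | A1 IH1 A2 IH2]; intros G.
  - apply c_id.
  - apply c_Lbot.
  - change (Base (And A1 A2)) with (andF (Base A1) (Base A2)).
    apply c_Land, c_Rand; try reflexivity; auto.
    permute_to (Base A2 :: Base A1 :: G); auto.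
  - change (Base (Or A1 A2)) with (orF (Base A1) (Base A2)).
    apply c_Lor; try reflexivity.
    + apply c_Rorl; try reflexivity; auto.
    + apply c_Rorr; try reflexivity; auto.
  - apply c_LRimp, c_Lmat; auto.
    permute_to [Base A1; Mat A1 A2]; auto.
Qed.

Ltac perm_cases HP :=
  destruct (Permutation_cons_cases _ _ _ _ HP) as [[? ?] | (?G1 & ?H1 & ?H2)].

Lemma GWFc_inv_Land X Y G Z : canon2 X -> canon2 Y ->
  GWFc (andF X Y :: G) Z -> GWFc (X :: Y :: G) Z.
Proof.
  intros HX HY d; revert d.
  enough (H : forall G2 Z, GWFc G2 Z -> forall G, Permutation G2 (andF X Y :: G) ->
            GWFc (X :: Y :: G) Z) by (intros d; exact (H _ _ d G (Permutation_refl _))).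
  clear G Z. induction 1; intros G0 HP.
  - apply IHGWFc. eapply perm_trans; eauto.
  - perm_cases HP; [conn_contra |]. permute_to (Base (Atom p) :: X :: Y :: G1). apply c_id.
  - perm_cases HP; [conn_contra |]. permute_to (Base Bot :: X :: Y :: G1). apply c_Lbot.
  - perm_cases HP.
    + destruct (andF_inj X0 Y0 X Y); auto; subst. permute_to (X :: Y :: G); auto.
    + permute_to (andF X0 Y0 :: X :: Y :: G1). apply c_Land; auto.
      permute_to (X :: Y :: X0 :: Y0 :: G1). apply IHGWFc. perm_solve.
  - apply c_Rand; auto.
  - perm_cases HP; [conn_contra |]. permute_to (orF X0 Y0 :: X :: Y :: G1). apply c_Lor; auto.
    + permute_to (X :: Y :: X0 :: G1). apply IHGWFc1. perm_solve.
    + permute_to (X :: Y :: Y0 :: G1). apply IHGWFc2. perm_solve.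
  - apply c_Rorl; auto.
  - apply c_Rorr; auto.
  - perm_cases HP; [conn_contra |]. permute_to (Mat A B :: X :: Y :: G1). apply c_Lmat.
    + permute_to (X :: Y :: Mat A B :: G1). apply IHGWFc1. perm_solve.
    + permute_to (X :: Y :: Base B :: G1). apply IHGWFc2. perm_solve.
  - apply c_Rmat. permute_to (X :: Y :: Base A :: G0). apply IHGWFc. perm_solve.
  - perm_cases HP; [conn_contra |]. permute_to (Base (Imp C E) :: X :: Y :: G1). apply c_LRimp; auto.
  - apply c_Rimp; auto.
Qed.

Lemma GWFc_inv_Lor X Y G Z : canon2 X -> canon2 Y ->
  GWFc (orF X Y :: G) Z -> GWFc (X :: G) Z /\ GWFc (Y :: G) Z.
Proof.
  intros HX HY d; revert d.
  enough (H : forall G2 Z, GWFc G2 Z -> forall G, Permutation G2 (orF X Y :: G) ->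
            GWFc (X :: G) Z /\ GWFc (Y :: G) Z) by (intros d; exact (H _ _ d G (Permutation_refl _))).
  clear G Z. induction 1; intros G0 HP.
  - apply IHGWFc. eapply perm_trans; eauto.
  - perm_cases HP; [conn_contra |].
    split; [permute_to (Base (Atom p) :: X :: G1) | permute_to (Base (Atom p) :: Y :: G1)]; apply c_id.
  - perm_cases HP; [conn_contra |].
    split; [permute_to (Base Bot :: X :: G1) | permute_to (Base Bot :: Y :: G1)]; apply c_Lbot.
  - perm_cases HP; [conn_contra |].
    destruct (IHGWFc (X0 :: Y0 :: G1)) as [I1 I2]; [perm_solve |].
    split; [permute_to (andF X0 Y0 :: X :: G1) | permute_to (andF X0 Y0 :: Y :: G1)];
      apply c_Land; auto.
    + permute_to (X :: X0 :: Y0 :: G1); auto.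
    + permute_to (Y :: X0 :: Y0 :: G1); auto.
  - destruct (IHGWFc1 G0), (IHGWFc2 G0); auto. split; apply c_Rand; auto.
  - perm_cases HP.
    + destruct (orF_inj X0 Y0 X Y); auto; subst.
      split; [permute_to (X :: G) | permute_to (Y :: G)]; auto.
    + destruct (IHGWFc1 (X0 :: G1)) as [I1 I2]; [perm_solve |].
      destruct (IHGWFc2 (Y0 :: G1)) as [J1 J2]; [perm_solve |].
      split; [permute_to (orF X0 Y0 :: X :: G1) | permute_to (orF X0 Y0 :: Y :: G1)];
        apply c_Lor; auto.
      * permute_to (X :: X0 :: G1); auto.
      * permute_to (X :: Y0 :: G1); auto.
      * permute_to (Y :: X0 :: G1); auto.
      * permute_to (Y :: Y0 :: G1); auto.
  - destruct (IHGWFc G0); auto. split; apply c_Rorl; auto.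
  - destruct (IHGWFc G0); auto. split; apply c_Rorr; auto.
  - perm_cases HP; [conn_contra |].
    destruct (IHGWFc1 (Mat A B :: G1)) as [I1 I2]; [perm_solve |].
    destruct (IHGWFc2 (Base B :: G1)) as [J1 J2]; [perm_solve |].
    split; [permute_to (Mat A B :: X :: G1) | permute_to (Mat A B :: Y :: G1)]; apply c_Lmat.
    + permute_to (X :: Mat A B :: G1); auto.
    + permute_to (X :: Base B :: G1); auto.
    + permute_to (Y :: Mat A B :: G1); auto.
    + permute_to (Y :: Base B :: G1); auto.
  - destruct (IHGWFc (Base A :: G0)) as [I1 I2]; [perm_solve |].
    split; apply c_Rmat; [permute_to (X :: Base A :: G0) | permute_to (Y :: Base A :: G0)]; auto.
  - perm_cases HP; [conn_contra |].
    split; [permute_to (Base (Imp C E) :: X :: G1) | permute_to (Base (Imp C E) :: Y :: G1)];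
      apply c_LRimp; auto.
  - split; apply c_Rimp; auto.
Qed.

Lemma GWFc_inv_Lmat A B G Z : GWFc (Mat A B :: G) Z -> GWFc (Base B :: G) Z.
Proof.
  enough (H : forall G2 Z, GWFc G2 Z -> forall G, Permutation G2 (Mat A B :: G) ->
            GWFc (Base B :: G) Z) by (intros d; exact (H _ _ d G (Permutation_refl _))).
  clear G Z. induction 1; intros G0 HP.
  - apply IHGWFc. eapply perm_trans; eauto.
  - perm_cases HP; [conn_contra |]. permute_to (Base (Atom p) :: Base B :: G1). apply c_id.
  - perm_cases HP; [conn_contra |]. permute_to (Base Bot :: Base B :: G1). apply c_Lbot.
  - perm_cases HP; [conn_contra |]. permute_to (andF X Y :: Base B :: G1). apply c_Land; auto.
    permute_to (Base B :: X :: Y :: G1). apply IHGWFc. perm_solve.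
  - apply c_Rand; auto.
  - perm_cases HP; [conn_contra |]. permute_to (orF X Y :: Base B :: G1). apply c_Lor; auto.
    + permute_to (Base B :: X :: G1). apply IHGWFc1. perm_solve.
    + permute_to (Base B :: Y :: G1). apply IHGWFc2. perm_solve.
  - apply c_Rorl; auto.
  - apply c_Rorr; auto.
  - perm_cases HP.
    + match goal with E : Mat _ _ = Mat _ _ |- _ => injection E as -> -> end.
      permute_to (Base B :: G); auto.
    + permute_to (Mat A0 B0 :: Base B :: G1). apply c_Lmat.
      * permute_to (Base B :: Mat A0 B0 :: G1). apply IHGWFc1. perm_solve.
      * permute_to (Base B :: Base B0 :: G1). apply IHGWFc2. perm_solve.
  - apply c_Rmat. permute_to (Base B :: Base A0 :: G0). apply IHGWFc. perm_solve.
  - perm_cases HP; [conn_contra |]. permute_to (Base (Imp C E) :: Base B :: G1). apply c_LRimp; auto.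
  - apply c_Rimp; auto.
Qed.

Lemma GWFc_Rbot_elim G Z : GWFc G (Base Bot) -> GWFc G Z.
Proof.
  intros d; revert Z. remember (Base Bot) as W eqn:HW.
  induction d; intros Z0; subst; try conn_contra.
  - eapply c_perm; eauto.
  - apply c_Lbot.
  - apply c_Land; auto.
  - apply c_Lor; auto.
  - apply c_Lmat; auto.
Qed.

Lemma GWFc_inv_Rand X Y G : canon2 X -> canon2 Y ->
  GWFc G (andF X Y) -> GWFc G X /\ GWFc G Y.
Proof.
  intros HX HY d. remember (andF X Y) as W eqn:HW.
  induction d; subst; try conn_contra.
  - destruct IHd as [I1 I2]; auto. split; eapply c_perm; eauto.
  - split; apply c_Lbot.
  - destruct IHd as [I1 I2]; auto. split; apply c_Land; auto.
  - destruct (andF_inj X0 Y0 X Y); auto; subst. auto.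
  - destruct IHd1, IHd2; auto. split; apply c_Lor; auto.
  - destruct IHd2; auto. split; apply c_Lmat; auto.
Qed.

Lemma GWFc_inv_Rmat A B G : GWFc G (Mat A B) -> GWFc (Base A :: G) (Base B).
Proof.
  intros d. remember (Mat A B) as W eqn:HW.
  induction d; subst; try conn_contra.
  - permute_to (Base A :: G); auto.
  - permute_to (Base Bot :: Base A :: G). apply c_Lbot.
  - permute_to (andF X Y :: Base A :: G). apply c_Land; auto.
    permute_to (Base A :: X :: Y :: G); auto.
  - permute_to (orF X Y :: Base A :: G). apply c_Lor; auto.
    + permute_to (Base A :: X :: G); auto.
    + permute_to (Base A :: Y :: G); auto.
  - permute_to (Mat A0 B0 :: Base A :: G). apply c_Lmat.
    + permute_to (Base A :: Mat A0 B0 :: G). apply GWFc_weaken; auto.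
    + permute_to (Base A :: Base B0 :: G); auto.
  - injection HW as -> ->. auto.
Qed.

Definition cut_admissible (X : Frm2) : Prop :=
  forall G Z, GWFc G X -> GWFc (X :: G) Z -> GWFc G Z.

Lemma GWFc_cut_andF X Y G Z : canon2 X -> canon2 Y ->
  cut_admissible X -> cut_admissible Y ->
  GWFc G (andF X Y) -> GWFc (X :: Y :: G) Z -> GWFc G Z.
Proof.
  intros HX HY cutX cutY d1 d2.
  destruct (GWFc_inv_Rand X Y G HX HY d1) as [dX dY].
  apply (cutX G Z dX), (cutY (X :: G) Z (GWFc_weaken _ _ _ dY)).
  permute_to (X :: Y :: G); auto.
Qed.

Lemma GWFc_cut_Mat A B G Z : cut_admissible (Base A) -> cut_admissible (Base B) ->
  GWFc G (Mat A B) -> GWFc G (Base A) -> GWFc (Base B :: G) Z -> GWFc G Z.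
Proof.
  intros cutA cutB d1 dA dZ.
  exact (cutB G Z (cutA G _ dA (GWFc_inv_Rmat A B G d1)) dZ).
Qed.

Lemma GWFc_cut_orF X Y G Z : canon2 X -> canon2 Y ->
  cut_admissible X -> cut_admissible Y ->
  GWFc G (orF X Y) -> GWFc (X :: G) Z -> GWFc (Y :: G) Z -> GWFc G Z.
Proof.
  intros HX HY cutX cutY d1; revert Z. remember (orF X Y) as W eqn:HW.
  induction d1; intros Z0 dX dY; subst; try conn_contra.
  - apply c_perm with G; auto. apply IHd1; auto.
    + permute_to (X :: G'); auto.
    + permute_to (Y :: G'); auto.
  - apply c_Lbot.
  - apply c_Land; auto. apply IHd1; auto.
    + permute_to (X0 :: Y0 :: X :: G). apply GWFc_inv_Land; auto. permute_to (X :: andF X0 Y0 :: G); auto.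
    + permute_to (X0 :: Y0 :: Y :: G). apply GWFc_inv_Land; auto. permute_to (Y :: andF X0 Y0 :: G); auto.
  - assert (HX' : GWFc (orF X0 Y0 :: X :: G) Z0) by (permute_to (X :: orF X0 Y0 :: G); auto).
    assert (HY' : GWFc (orF X0 Y0 :: Y :: G) Z0) by (permute_to (Y :: orF X0 Y0 :: G); auto).
    apply GWFc_inv_Lor in HX' as [I1 I2]; auto. apply GWFc_inv_Lor in HY' as [J1 J2]; auto.
    apply c_Lor; auto.
    + apply IHd1_1; auto. permute_to (X0 :: X :: G); auto. permute_to (X0 :: Y :: G); auto.
    + apply IHd1_2; auto. permute_to (Y0 :: X :: G); auto. permute_to (Y0 :: Y :: G); auto.
  - destruct (orF_inj X0 Y0 X Y); auto; subst. exact (cutX G Z0 d1 dX).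
  - destruct (orF_inj X0 Y0 X Y); auto; subst. exact (cutY G Z0 d1 dY).
  - apply c_Lmat; auto. apply IHd1_2; auto.
    + permute_to (Base B :: X :: G). apply (GWFc_inv_Lmat A). permute_to (X :: Mat A B :: G); auto.
    + permute_to (Base B :: Y :: G). apply (GWFc_inv_Lmat A). permute_to (Y :: Mat A B :: G); auto.
Qed.

(* The two strict implications meet only in the premises of [LRimp]/[Rimp], where the
   cut on [A -> B] becomes a cut on [A ⊃ B]. *)
Lemma GWFc_cut_Imp A B A' B' G : cut_admissible (Mat A B) ->
  GWFc G (Base (Imp A B)) -> GWFc [Mat A B; Base A'] (Base B') -> GWFc G (Base (Imp A' B')).
Proof.
  intros cutM d1 d2. remember (Base (Imp A B)) as W eqn:HW.
  induction d1; subst; try conn_contra.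
  - eapply c_perm; eauto.
  - apply c_Lbot.
  - apply c_Land; auto.
  - apply c_Lor; auto.
  - apply c_Lmat; auto.
  - injection HW as -> ->. apply c_LRimp, (cutM [Mat C E; Base A']).
    + apply c_Rmat. permute_to [Base A'; Mat C E; Base A]. apply GWFc_weaken; auto.
    + permute_to [Mat C E; Mat A B; Base A']. apply GWFc_weaken; auto.
  - injection HW as -> ->. apply c_Rimp, (cutM [Base A']); auto.
    apply c_Rmat. permute_to [Base A'; Base A]. apply GWFc_weaken; auto.
Qed.

Lemma GWFc_cut X : cut_admissible X.
Proof.
  induction X as [X IH] using (well_founded_ind (Wf_nat.well_founded_ltof _ size2)).
  unfold Wf_nat.ltof in IH.
  enough (H : forall G2 Z, GWFc G2 Z -> forall G, Permutation G2 (X :: G) ->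
            GWFc G X -> GWFc G Z) by (intros G Z d1 d2; exact (H _ _ d2 G (Permutation_refl _) d1)).
  induction 1; intros G0 HP d1.
  - apply IHGWFc; auto. eapply perm_trans; eauto.
  - perm_cases HP; subst; auto. permute_to (Base (Atom p) :: G1). apply c_id.
  - perm_cases HP; subst.
    + apply GWFc_Rbot_elim; auto.
    + permute_to (Base Bot :: G1). apply c_Lbot.
  - perm_cases HP; subst.
    + rewrite size2_andF in IH.
      apply (GWFc_cut_andF X0 Y G0); auto; [apply IH; lia | apply IH; lia |].
      permute_to (X0 :: Y :: G); auto.
    + permute_to (andF X0 Y :: G1). apply c_Land; auto.
      apply IHGWFc; [perm_solve |]. apply GWFc_inv_Land; auto. permute_to G0; auto.
  - apply c_Rand; auto.
  - perm_cases HP; subst.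
    + rewrite size2_orF in IH.
      apply (GWFc_cut_orF X0 Y G0); auto; [apply IH; lia | apply IH; lia | |].
      * permute_to (X0 :: G); auto.
      * permute_to (Y :: G); auto.
    + destruct (GWFc_inv_Lor X0 Y G1 X) as [I1 I2]; auto; [permute_to G0; auto |].
      permute_to (orF X0 Y :: G1). apply c_Lor; auto.
      * apply IHGWFc1; [perm_solve | auto].
      * apply IHGWFc2; [perm_solve | auto].
  - apply c_Rorl; auto.
  - apply c_Rorr; auto.
  - perm_cases HP; subst.
    + apply (GWFc_cut_Mat A B G0); [apply IH; simpl; lia | apply IH; simpl; lia | auto | |].
      * apply IHGWFc1; [perm_solve | auto].
      * permute_to (Base B :: G); auto.
    + permute_to (Mat A B :: G1). apply c_Lmat.
      * apply IHGWFc1; [perm_solve | permute_to G0; auto].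
      * apply IHGWFc2; [perm_solve |]. apply (GWFc_inv_Lmat A). permute_to G0; auto.
  - apply c_Rmat, IHGWFc; [perm_solve | apply GWFc_weaken; auto].
  - perm_cases HP; subst.
    + apply (GWFc_cut_Imp C E); [apply IH; simpl; lia | auto | auto].
    + permute_to (Base (Imp C E) :: G1). apply c_LRimp; auto.
  - apply c_Rimp; auto.
Qed.

Lemma GWFc_bigOr_R A D G : In A D -> GWFc G (Base A) -> GWFc G (Base (bigOr D)).
Proof.
  revert G; induction D as [| A1 [| A2 D] IH]; intros G HA dA; [destruct HA | |].
  - destruct HA as [<- | []]; exact dA.
  - change (Base (bigOr (A1 :: A2 :: D))) with (orF (Base A1) (Base (bigOr (A2 :: D)))).
    destruct HA as [<- | HA].
    + apply c_Rorl; auto; reflexivity.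
    + apply c_Rorr; [reflexivity | reflexivity | exact (IH G HA dA)].
Qed.

Lemma GWFc_bigOr_L D G Z : (forall A, In A D -> GWFc (Base A :: G) Z) ->
  GWFc (Base (bigOr D) :: G) Z.
Proof.
  induction D as [| A1 [| A2 D] IH]; intros HD.
  - apply c_Lbot.
  - apply HD; left; reflexivity.
  - change (Base (bigOr (A1 :: A2 :: D))) with (orF (Base A1) (Base (bigOr (A2 :: D)))).
    apply c_Lor; try reflexivity.
    + apply HD; left; reflexivity.
    + apply IH; intros A HA; apply HD; right; exact HA.
Qed.

Lemma GWFc_bigOr_cut D G Z : GWFc G (Base (bigOr D)) ->
  (forall A, In A D -> GWFc (Base A :: G) Z) -> GWFc G Z.
Proof. intros d HD. apply (GWFc_cut _ G Z d), GWFc_bigOr_L, HD. Qed.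

Lemma GWFc_bigOr_member A D G : In A D -> GWFc (Base A :: G) (Base (bigOr D)).
Proof. intros HA; apply (GWFc_bigOr_R A); [exact HA | apply GWFc_refl]. Qed.

Lemma GWFc_bigOr_incl D D' G : incl D D' ->
  GWFc G (Base (bigOr D)) -> GWFc G (Base (bigOr D')).
Proof.
  intros HDD' d. apply (GWFc_bigOr_cut D G _ d).
  intros A HA; apply GWFc_bigOr_member, HDD', HA.
Qed.

Lemma GWFc_bigOr_And A B D G : GWFc G (Base (bigOr (A :: D))) ->
  GWFc G (Base (bigOr (B :: D))) -> GWFc G (Base (bigOr (And A B :: D))).
Proof.
  intros dA dB. apply (GWFc_bigOr_cut _ G _ dA); intros A' [<- | HA'].
  - apply (GWFc_bigOr_cut _ _ _ (GWFc_weaken _ _ _ dB)); intros B' [<- | HB'].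
    + apply (GWFc_bigOr_R (And A B)); [left; reflexivity |].
      change (Base (And A B)) with (andF (Base A) (Base B)).
      apply c_Rand; try reflexivity.
      * permute_to (Base A :: Base B :: G). apply GWFc_refl.
      * apply GWFc_refl.
    + apply GWFc_bigOr_member; right; exact HB'.
  - apply GWFc_bigOr_member; right; exact HA'.
Qed.

Lemma GWFc_bigOr_Or A B D G : GWFc G (Base (bigOr (A :: B :: D))) ->
  GWFc G (Base (bigOr (Or A B :: D))).
Proof.
  intros d. apply (GWFc_bigOr_cut _ G _ d); intros C [<- | [<- | HC]].
  1, 2: apply (GWFc_bigOr_R (Or A B)); [left; reflexivity |];
    change (Base (Or A B)) with (orF (Base A) (Base B)).
  - apply c_Rorl; try reflexivity. apply GWFc_refl.
  - apply c_Rorr; try reflexivity. apply GWFc_refl.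
  - apply GWFc_bigOr_member; right; exact HC.
Qed.

Lemma GWFc_bigOr_Lmat A B D G : GWFc G (Base (bigOr (A :: D))) ->
  GWFc (Base B :: G) (Base (bigOr D)) -> GWFc (Mat A B :: G) (Base (bigOr D)).
Proof.
  intros dA dB. apply (GWFc_bigOr_cut _ _ _ (GWFc_weaken _ _ (Mat A B) dA)).
  intros A' [<- | HA'].
  - permute_to (Mat A B :: Base A :: G). apply c_Lmat.
    + permute_to (Base A :: Mat A B :: G). apply GWFc_refl.
    + permute_to (Base A :: Base B :: G). apply GWFc_weaken, dB.
  - apply GWFc_bigOr_member, HA'.
Qed.

Ltac split_succedent H :=
  match type of H with map norm2 (_ :: _) = map Base ?D =>
    destruct D as [| ?A ?D]; [discriminate H |]; injection H as ?HA ?HD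
  end.

(* Succedent formulas of GWF are arbitrary Frm2-terms; in a derivation of [G => map Base D]
   they all normalise to Frm-formulas. *)
Lemma GWF_GWFc G D : GWF G D -> forall Ds, map norm2 D = map Base Ds ->
  GWFc (map norm2 G) (Base (bigOr Ds)).
Proof.
  induction 1 as [G G' D1 D2 HG HD d IH | | | X Y G D1 d IH | X Y G D1 d1 IH1 d2 IH2
    | X Y G D1 d1 IH1 d2 IH2 | X Y G D1 d IH | A B G D1 d1 IH1 d2 IH2 | A B G D1 d IH
    | A B C E G D1 d IH | A B G D1 d IH]; intros Ds HDs; cbn [map].
  - pose proof (Permutation_map norm2 HD) as HPm; rewrite HDs in HPm.
    destruct (Permutation_map_inv _ _ HPm) as (Ds0 & HDs0 & HP).
    apply c_perm with (map norm2 G); [apply Permutation_map, HG |].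
    apply (GWFc_bigOr_incl Ds0); [intros A; apply Permutation_in, Permutation_sym, HP |].
    apply IH, HDs0.
  - split_succedent HDs; subst.
    apply (GWFc_bigOr_R (Atom p)); [left; reflexivity | apply c_id].
  - apply c_Lbot.
  - rewrite norm2_andF, andF_norm2.
    apply c_Land; try apply canon2_norm2. apply IH, HDs.
  - split_succedent HDs. rewrite norm2_andF in HA.
    destruct (andF_eq_Base X Y A HA) as (A1 & A2 & HX & HY & ->).
    apply GWFc_bigOr_And; [apply IH1 | apply IH2]; simpl; congruence.
  - rewrite norm2_orF, orF_norm2.
    apply c_Lor; try apply canon2_norm2; [apply IH1 | apply IH2]; exact HDs.
  - split_succedent HDs. rewrite norm2_orF in HA.
    destruct (orF_eq_Base X Y A HA) as (A1 & A2 & HX & HY & ->).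
    apply GWFc_bigOr_Or, IH; simpl; congruence.
  - apply GWFc_bigOr_Lmat; [apply IH1 | apply IH2]; simpl; congruence.
  - split_succedent HDs. discriminate HA.
  - split_succedent HDs; subst.
    apply (GWFc_bigOr_R (Imp A B)); [left; reflexivity |].
    apply c_LRimp, (IH [B]); reflexivity.
  - split_succedent HDs; subst.
    apply (GWFc_bigOr_R (Imp A B)); [left; reflexivity |].
    apply c_Rimp, (IH [B]); reflexivity.
Qed.

Lemma map_norm2_canon2 (G : list Frm2) : Forall canon2 G -> map norm2 G = G.
Proof. induction 1 as [| X G HX _ IH]; simpl; [reflexivity | rewrite HX, IH; reflexivity]. Qed.

Theorem theorem5p6 (G : list Frm2) (D : list Frm) :
  Forall canon2 G ->
  GWF G (map Base D) -> GWFs G (Base (bigOr D)).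
Proof.
  intros HG d. apply GWFc_GWFs.
  rewrite <- (map_norm2_canon2 G HG).
  apply (GWF_GWFc _ _ d). rewrite map_map; reflexivity.
Qed.
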